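(* Let $\Delta\subseteq\mathbb{Q}^d$ be a $d$-dimensional IP simplex of Gorenstein index $g$ with associated unit fraction partition $A(\Delta)=(\alpha_0,\dots,\alpha_d)$. Then $A(\Delta)=A(\Delta^* )$ and \begin{enumerate} \item $\mathrm{Vol}(\Delta)\mathrm{Vol}(\Delta^* )=\dfrac{\alpha_0\cdots\alpha_d}{g^{d+1}}$; \item $\lambda(\Delta^* )\mathrm{Vol}(\Delta)=\lambda(\Delta)\mathrm{Vol}(\Delta^* )=\dfrac{1}{g^d}\dfrac{\alpha_0\cdots\alpha_d}{\mathrm{lcm}(\alpha_0,\dots,\alpha_d)}$; \item $\lambda(\Delta)\lambda(\Delta^* )=\dfrac{1}{g^{d-1}}\dfrac{\alpha_0\cdots\alpha_d}{\mathrm{lcm}(\alpha_0,\dots,\alpha_d)^2}$. \end{enumerate}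
   Context: An IP simplex is a full-dimensional rational simplex in $\mathbb{Q}^d$ containing the origin in its interior; its dual is $\Delta^*=\{u:\langle u,v\rangle\ge-1\ \forall v\in\Delta\}$ (again an IP simplex). Gorenstein index: $g(\Delta)=g_{\mathbb{Q}}(\Delta)g_{\mathbb{Q}}(\Delta^* )$, where $g_{\mathbb{Q}}(\Delta)$ is the least $k\ge1$ with $k\Delta$ having integral vertices. $\mathrm{Vol}=d!\cdot$Euclidean volume. For an IP simplex with vertices $v_0,\dots,v_d$ its weight system is $Q_\Delta=(q_0,\dots,q_d)$, $q_i=|\det(v_j:j\neq i)|$, and $|Q_\Delta|=q_0+\dots+q_d$. The factor $\lambda(\Delta)$ is the unique positive rational such that $Q_\Delta=\lambda(\Delta)\,Q'$ with $Q'$ a tuple of positive integers with $\gcd 1$. The associated unit fraction partition is $A(\Delta)=\big(\tfrac{g|Q_\Delta|}{q_0},\dots,\tfrac{g|Q_\Delta|}{q_d}\big)$, a tuple of positive integers with $\sum_i 1/\alpha_i=1/g$. *)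

(* IP simplices in Q^d, encoded by their vertex matrices:
   a matrix V : 'M[rat]_(d.+1, d) whose i-th row is the vertex v_i. *)
From mathcomp Require Import all_boot all_order all_algebra.
Set Implicit Arguments. Unset Strict Implicit. Unset Printing Implicit Defensive.
Import Order.TTheory GRing.Theory Num.Theory.
Local Open Scope ring_scope.

Section IPSimplex.
Variable d : nat.
Implicit Types (V W : 'M[rat]_(d.+1, d)) (x u : 'rV[rat]_d).

Definition inner u x : rat := \sum_(j < d) u 0 j * x 0 j.

Definition in_conv V x : Prop :=
  exists c : 'I_d.+1 -> rat,
    [/\ forall i, 0 <= c i, \sum_i c i = 1 & x = \sum_i c i *: row i V].

Definition edge_mx V : 'M[rat]_d :=
  \matrix_(i < d, j < d) (V (lift ord0 i) j - V ord0 j).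

Definition full_dim V : Prop := row_free (edge_mx V).

Definition origin_interior V : Prop :=
  exists2 eps : rat, 0 < eps &
    forall x, (forall j, `|x 0 j| < eps) -> in_conv V x.

Definition IP_simplex V : Prop := full_dim V /\ origin_interior V.

Definition in_dual V u : Prop := forall x, in_conv V x -> -1 <= inner u x.

(* normalized volume Vol = d! * Euclidean volume of the simplex *)
Definition Vol V : rat := `|\det (edge_mx V)|.

Definition weight V (i : 'I_d.+1) : rat := `|\det (row' i V)|.
Definition weight_sum V : rat := \sum_i weight V i.

Definition integral_verts V (k : nat) : bool :=
  [forall i, forall j, k%:R * V i j \is a Num.int].

Lemma integral_verts_ex V : exists k, (0 < k)%N && integral_verts V k.
Proof.
exists (\prod_(p : 'I_d.+1 * 'I_d) `|denq (V p.1 p.2)|%N)%N.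
apply/andP; split.
  by rewrite prodn_gt0 // => p; rewrite absz_gt0 denq_neq0.
apply/forallP => i; apply/forallP => j.
rewrite (bigD1 (i, j)) //= natrM mulrAC.
have -> : (`|denq (V i j)|%:R * V i j : rat) = (numq (V i j))%:~R.
  by rewrite natr_absz ger0_norm ?ltW ?denq_gt0 // numqE mulrC.
by rewrite rpredM ?rpred_int ?rpred_nat.
Qed.

Definition gQ V : nat := ex_minn (integral_verts_ex V).

(* Gorenstein index g(Delta) = g_Q(Delta) g_Q(Delta^* ), where W lists the
   vertices of Delta^* *)
Definition gor V W : nat := (gQ V * gQ W)%N.

Definition is_lambda V (l : rat) : Prop :=
  0 < l /\ exists n : 'I_d.+1 -> nat,
    [/\ forall i, (0 < n i)%N, (\big[gcdn/0%N]_i n i)%N = 1%N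
      & forall i, weight V i = l * (n i)%:R].

Definition ufp V W (i : 'I_d.+1) : rat := (gor V W)%:R * weight_sum V / weight V i.

Definition ufp_seq V W : seq rat := [seq ufp V W i | i <- enum 'I_d.+1].

(* lcm(alpha_0,...,alpha_d); the alpha_i are positive integers *)
Definition ufp_lcm V W : nat := (\big[lcmn/1%N]_i Num.truncn (ufp V W i))%N.

End IPSimplex.

From mathcomp Require Import all_boot all_order all_algebra.
From mathcomp Require Import ring.
From mathcomp Require Import fingroup perm.
Import Order.TTheory GRing.Theory Num.Theory.
Local Open Scope ring_scope.
Set Implicit Arguments. Unset Strict Implicit. Unset Printing Implicit Defensive.

(* Let M be the matrix with rows (1, v_i) for the vertices v_i of V. The first
   row b of M^-1 holds the barycentric coordinates of the origin, and Cramer's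
   rule gives q_i = |det M| b_i. The rows of N := diag(1/b) (M^-1)^T are vectors
   (1, u_i) with <u_i, v_j> = [i = j] / b_i - 1, so the u_i lie in the dual and
   are the only points of it whose barycentric coordinates with respect to the
   u_j are unit vectors: they are the vertices of W. Hence the weights of W are
   those of V permuted and rescaled, alpha_i = g / b_i for both simplices and
   Vol V Vol W = |det M det N| = prod_i 1 / b_i. The lcm and lambda formulas
   follow because alpha_i n_i = g Vol V / lambda(V) for the primitive weights
   n_i of V. *)

Section Homogenization.
Variable d : nat.
Implicit Types (X : 'M[rat]_(d.+1, d)) (u x : 'rV[rat]_d).

Definition hom_mx X : 'M[rat]_d.+1 :=
  \matrix_(i, j) (if unlift ord0 j is Some k then X i k else 1).

Lemma hom_mx_lift X i k : hom_mx X i (lift ord0 k) = X i k.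
Proof. by rewrite mxE liftK. Qed.

Lemma hom_mx0 X i : hom_mx X i ord0 = 1.
Proof. by rewrite mxE unlift_none. Qed.

Lemma col'_hom_mx X : col' ord0 (hom_mx X) = X.
Proof. by apply/matrixP => i j; rewrite mxE hom_mx_lift. Qed.

Lemma det_hom_mx X : \det (hom_mx X) = \det (edge_mx X).
Proof.
(* subtracting row 0 from the other rows leaves e_0 in column 0 and the edge
   vectors in the remaining block *)
pose P : 'M[rat]_d.+1 :=
  \matrix_(i, j) ((i == j)%:R - ((i != ord0) && (j == ord0))%:R).
have detP : \det P = 1.
  rewrite (expand_det_row _ ord0) big_ord_recl big1 => [|i _]; last first.
    by rewrite !mxE /= subr0 mul0r.
  rewrite addr0 /cofactor !mxE /= subr0 mul1r addn0 expr0 mul1r.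
  rewrite -[RHS](@det1 rat d); congr (\det _); apply/matrixP => i j.
  by rewrite !mxE /= (inj_eq lift_inj) subr0.
have PX0 i : (P *m hom_mx X) i ord0 = (i == ord0)%:R.
  rewrite mxE; under eq_bigr do rewrite hom_mx0 mulr1.
  rewrite (bigD1 ord0) //=; case: (unliftP ord0 i) => [i'|] ->.
    rewrite (bigD1 (lift ord0 i')) //= big1 => [|k /andP[k0 ki]].
      rewrite addr0 !mxE eqxx (eq_sym _ ord0) (negbTE (neq_lift ord0 i')) /=.
      by rewrite (inj_eq lift_inj) eqxx subr0 sub0r addNr.
    by rewrite !mxE (negbTE k0) andbF subr0 eq_sym (negbTE ki).
  rewrite big1 => [|k k0]; first by rewrite addr0 !mxE eqxx /= subr0.
  by rewrite !mxE (negbTE k0) eq_sym (negbTE k0) subrr.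
have PXlift i k : (P *m hom_mx X) (lift ord0 i) (lift ord0 k) = edge_mx X i k.
  rewrite !mxE (bigD1 ord0) //= (bigD1 (lift ord0 i)) //= big1 => [|l /andP[l0 li]].
    by rewrite !mxE !liftK /= eqxx /= subr0 mul1r sub0r mulN1r addrC.
  by rewrite /P !mxE (negbTE l0) andbF subr0 eq_sym (negbTE li) mul0r.
rewrite -[LHS]mul1r -detP -det_mulmx (expand_det_col _ ord0) big_ord_recl.
rewrite big1 => [|i _]; last by rewrite PX0 eq_sym (negbTE (neq_lift ord0 i)) mul0r.
rewrite addr0 PX0 eqxx mul1r /cofactor addn0 expr0 mul1r.
by congr (\det _); apply/matrixP => i j; rewrite -PXlift 2![LHS]mxE.
Qed.

Lemma hom_mx_unit X : full_dim X -> hom_mx X \in unitmx.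
Proof. by rewrite /full_dim row_free_unit !unitmxE det_hom_mx. Qed.

Lemma Vol_hom_mx X : Vol X = `|\det (hom_mx X)|.
Proof. by rewrite /Vol det_hom_mx. Qed.

(* Cramer's rule: c is the first row of the inverse of hom_mx X. *)
Lemma weight_bary X (c : 'rV[rat]_d.+1) i :
  hom_mx X \in unitmx -> c *m hom_mx X = delta_mx 0 ord0 ->
  weight X i = `|\det (hom_mx X)| * `|c 0 i|.
Proof.
move=> uX cX; have dX : \det (hom_mx X) != 0 by rewrite -unitfE -unitmxE.
have -> : c = delta_mx 0 ord0 *m invmx (hom_mx X) by rewrite -cX mulmxK.
rewrite -rowE mxE /invmx uX !mxE /cofactor col'_hom_mx addn0.
rewrite !normrM normfV normrX normrN1 expr1n mul1r mulrA mulfV ?mul1r //.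
by rewrite normr_eq0.
Qed.

Lemma hom_mx_conv0 X (c : 'I_d.+1 -> rat) :
  \sum_i c i = 1 -> \sum_i c i *: row i X = 0 ->
  (\row_i c i) *m hom_mx X = delta_mx 0 ord0.
Proof.
move=> c1 c0; apply/matrixP => a l; rewrite ord1 !mxE.
case: (unliftP ord0 l) => [k|] ->.
  rewrite eqxx /=; transitivity ((\sum_i c i *: row i X) 0 k); last first.
    by rewrite c0 mxE.
  by rewrite summxE; apply: eq_bigr => i _; rewrite hom_mx_lift !mxE.
by rewrite !eqxx /= -c1; apply: eq_bigr => i _; rewrite hom_mx0 !mxE mulr1.
Qed.

Lemma row_in_conv X j : in_conv X (row j X).
Proof.
exists (fun i => (i == j)%:R); split.
- by move=> i; rewrite ler0n.
- by rewrite (bigD1 j) //= big1 ?addr0 ?eqxx // => i /negbTE ->.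
- rewrite (bigD1 j) //= big1 ?addr0 ?eqxx ?scale1r // => i /negbTE ->.
  by rewrite scale0r.
Qed.

Lemma innerC u x : inner u x = inner x u.
Proof. by apply: eq_bigr => k _; rewrite mulrC. Qed.

Lemma inner_sumr (I : finType) u (c : I -> rat) (x : I -> 'rV[rat]_d) :
  inner u (\sum_i c i *: x i) = \sum_i c i * inner u (x i).
Proof.
rewrite /inner; under eq_bigr do rewrite summxE mulr_sumr.
rewrite exchange_big /=; apply: eq_bigr => i _; rewrite mulr_sumr.
by apply: eq_bigr => k _; rewrite !mxE mulrCA.
Qed.

Lemma inner_suml (I : finType) x (c : I -> rat) (u : I -> 'rV[rat]_d) :
  inner (\sum_i c i *: u i) x = \sum_i c i * inner (u i) x.
Proof.
by rewrite innerC inner_sumr; apply: eq_bigr => i _; rewrite innerC.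
Qed.

Lemma origin_interior_conv0 X : origin_interior X -> in_conv X 0.
Proof. by case=> eps eps0; apply => j; rewrite mxE normr0. Qed.

Lemma gQ_spec X : (0 < gQ X)%N && integral_verts X (gQ X).
Proof. by rewrite /gQ; case: ex_minnP. Qed.

Lemma gor_gt0 X Y : (0 < gor X Y)%N.
Proof.
by rewrite muln_gt0; case/andP: (gQ_spec X) => -> _; case/andP: (gQ_spec Y).
Qed.

End Homogenization.

Lemma primitive_scale_uniq k (n m : 'I_k -> nat) (a b : rat) : 0 < a -> 0 < b ->
  (\big[gcdn/0]_i n i)%N = 1%N -> (\big[gcdn/0]_i m i)%N = 1%N ->
  (forall i, a * (n i)%:R = b * (m i)%:R) -> a = b.
Proof.
move=> a0 b0 gn gm e; pose x := a / b.
have xe i : x * (n i)%:R = (m i)%:R.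
  by rewrite /x mulrAC e mulrAC divff ?mul1r // gt_eqF.
pose p := `|numq x|%N; pose q := `|denq x|%N.
have pE : (p%:R : rat) = (numq x)%:~R.
  by rewrite natr_absz ger0_norm // numq_ge0 ltW // divr_gt0.
have qE : (q%:R : rat) = (denq x)%:~R.
  by rewrite natr_absz ger0_norm // ltW // denq_gt0.
have cpq : coprime p q by apply: coprime_num_den.
have pnqm i : (p * n i = q * m i)%N.
  by apply/eqP; rewrite -(@eqr_nat rat) !natrM pE qE numqE mulrAC xe mulrC.
have q1 : q = 1%N.
  apply/eqP; rewrite -dvdn1 -gn; apply/dvdn_biggcdP => i _.
  by rewrite -(@Gauss_dvdr _ p) 1?coprime_sym // pnqm dvdn_mulr.
have p1 : p = 1%N.
  apply/eqP; rewrite -dvdn1 -gm; apply/dvdn_biggcdP => i _.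
  by rewrite -(Gauss_dvdr (m i) cpq) -pnqm dvdn_mulr.
have : x = 1 by rewrite -[x]divq_num_den -pE -qE p1 q1 divr1.
by move/(congr1 ( *%R^~ b)); rewrite /x divfK ?gt_eqF // mul1r.
Qed.

Lemma biglcmn_primitive k (a n : 'I_k -> nat) (K : nat) :
  (forall i, 0 < a i)%N -> (\big[gcdn/0]_i n i)%N = 1%N ->
  (forall i, a i * n i = K)%N -> (\big[lcmn/1]_i a i)%N = K.
Proof.
move=> a0 gn aK; set l := (\big[lcmn/1]_i a i)%N.
have /dvdnP[t Kt] : (l %| K)%N.
  by apply/dvdn_biglcmP => i _; rewrite -(aK i) dvdn_mulr.
suff t1 : t = 1%N by rewrite Kt t1 mul1n.
apply/eqP; rewrite -dvdn1 -gn; apply/dvdn_biggcdP => i _.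
have /dvdnP[s ls] : (a i %| l)%N by move/dvdn_biglcmP: (dvdnn l); apply.
have : (a i * n i = a i * (t * s))%N by rewrite aK Kt ls mulnA mulnC.
by move/eqP; rewrite eqn_pmul2l // => /eqP ->; rewrite dvdn_mulr.
Qed.

Lemma volume_lambda_identities (d : nat) (g v w l l' : rat) :
  g != 0 -> v != 0 -> l != 0 -> l' = l * w / v ->
  let P := g ^+ d.+1 * v * w in
  let L := g * v / l in
  [/\ v * w = P / g ^+ d.+1,
      l' * v = P / (g ^+ d * L) /\ l * w = P / (g ^+ d * L)
    & l * l' = P / (g ^ (d%:Z - 1) * L ^+ 2)].
Proof.
move=> g0 v0 l0 -> P L; rewrite {}/P {}/L exprS.
have gd0 : g ^+ d != 0 by rewrite expf_neq0.
by split; [|split|rewrite expfzDr // exprN1 -exprnP]; field; rewrite ?g0 ?v0 ?l0 ?gd0.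
Qed.

Section DualSimplex.
Variables (d : nat) (V : 'M[rat]_(d.+1, d)).
Hypotheses (V_full : full_dim V) (V_conv0 : in_conv V 0).
Hypothesis weightV_gt0 : forall i, 0 < weight V i.

Local Notation M := (hom_mx V).

Lemma homV_unit : M \in unitmx.
Proof. exact: hom_mx_unit. Qed.

Lemma det_homV_neq0 : `|\det M| != 0.
Proof. by rewrite normr_eq0 -unitfE -unitmxE homV_unit. Qed.

(* The barycentric coordinates of the origin with respect to the vertices of V. *)
Definition bary i : rat := invmx M ord0 i.

Lemma bary_hom : (\row_i bary i) *m M = delta_mx 0 ord0.
Proof.
have -> : \row_i bary i = delta_mx 0 ord0 *m invmx M.
  by apply/matrixP => a i; rewrite ord1 -rowE !mxE.
by rewrite mulmxKV // homV_unit.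
Qed.

Lemma bary_ge0 i : 0 <= bary i.
Proof.
case: V_conv0 => c [c0 c1 cV].
have := hom_mx_conv0 c1 (esym cV); rewrite -bary_hom.
move/(can_inj (mulmxK homV_unit))/matrixP/(_ 0 i).
by rewrite !mxE => <-; exact: c0.
Qed.

Lemma weightV_bary i : weight V i = `|\det M| * bary i.
Proof.
by rewrite (weight_bary i homV_unit bary_hom) mxE (ger0_norm (bary_ge0 i)).
Qed.

Lemma bary_gt0 i : 0 < bary i.
Proof.
have := weightV_gt0 i; rewrite weightV_bary pmulr_rgt0 //.
by rewrite lt_def det_homV_neq0 normr_ge0.
Qed.

Lemma bary_neq0 i : bary i != 0.
Proof. by rewrite gt_eqF ?bary_gt0. Qed.

Lemma sum_bary : \sum_i bary i = 1.
Proof.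
have /matrixP/(_ 0 ord0) := bary_hom; rewrite !mxE !eqxx mulr1n => <-.
by apply: eq_bigr => i _; rewrite hom_mx0 mxE mulr1.
Qed.

Lemma weight_sumV : weight_sum V = `|\det M|.
Proof.
rewrite /weight_sum; under eq_bigr do rewrite weightV_bary.
by rewrite -mulr_sumr sum_bary mulr1.
Qed.

(* The rows of [dual_hom] are the vectors (1, u_i), where u_i is the vertex of
   the dual simplex opposite to the facet of V missing v_i. *)
Definition dual_hom : 'M[rat]_d.+1 := \matrix_(i, l) (invmx M l i / bary i).
Definition dual_vert : 'M[rat]_(d.+1, d) :=
  \matrix_(i, k) dual_hom i (lift ord0 k).

Local Notation N := dual_hom.
Local Notation U := dual_vert.

Lemma dual_hom0 i : N i ord0 = 1.
Proof. by rewrite mxE divff ?bary_neq0. Qed.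

Lemma hom_mx_dual_hom j i : \sum_l M j l * N i l = (j == i)%:R / bary i.
Proof.
have /matrixP/(_ j i) := mulmxV homV_unit; rewrite !mxE => <-.
by rewrite mulr_suml; apply: eq_bigr => l _; rewrite [N _ _]mxE mulrA.
Qed.

Lemma inner_dual_vert i j :
  inner (row i U) (row j V) = (j == i)%:R / bary i - 1.
Proof.
rewrite -hom_mx_dual_hom big_ord_recl hom_mx0 dual_hom0 mulr1 addrC addKr.
by apply: eq_bigr => k _; rewrite hom_mx_lift !mxE mulrC.
Qed.

Lemma bary_dual_hom : (\row_i bary i) *m N = delta_mx 0 ord0.
Proof.
apply/matrixP => a l; rewrite ord1 !mxE eqxx /=.
have /matrixP/(_ l ord0) := mulVmx homV_unit; rewrite !mxE => <-.
by apply: eq_bigr => i _; rewrite hom_mx0 mulr1 !mxE mulrC divfK ?bary_neq0.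
Qed.

Lemma det_hom_mx_dual_hom : \det M * \det N = \prod_i (bary i)^-1.
Proof.
have MN : M *m N^T = diag_mx (\row_i (bary i)^-1).
  apply/matrixP => j i; rewrite mxE; under eq_bigr do rewrite [N^T _ _]mxE.
  rewrite hom_mx_dual_hom !mxE.
  by case: eqVneq => [->|_]; rewrite ?mul1r ?mulr1n ?mul0r ?mulr0n.
rewrite -(det_tr N) -det_mulmx MN det_diag.
by apply: eq_bigr => i _; rewrite mxE.
Qed.

Lemma det_dual_hom_neq0 : `|\det N| != 0.
Proof.
rewrite normr_eq0; apply/eqP => N0; move: det_hom_mx_dual_hom.
rewrite N0 mulr0 => /esym/eqP; rewrite prodf_seq_eq0 => /hasP[i _ /=].
by rewrite invr_eq0 (negbTE (bary_neq0 i)).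
Qed.

Lemma dual_vert_in_dual i : in_dual V (row i U).
Proof.
move=> x [c [c0 c1 ->]]; rewrite inner_sumr -c1 -sumrN.
apply: ler_sum => j _; rewrite inner_dual_vert mulrBr mulr1 addrC lerDl.
by rewrite mulr_ge0 ?divr_ge0 ?ler0n ?bary_ge0.
Qed.

(* The barycentric coordinates of w with respect to the rows of U. *)
Definition dual_coord j (w : 'rV[rat]_d) : rat := bary j * (1 + inner w (row j V)).

Lemma dual_coord_hom (w : 'rV[rat]_d) l :
  \sum_j dual_coord j w * N j l = if unlift ord0 l is Some k then w 0 k else 1.
Proof.
pose z : 'rV[rat]_d.+1 := \row_l (if unlift ord0 l is Some k then w 0 k else 1).
have -> : (if unlift ord0 l is Some k then w 0 k else 1) = z 0 l by rewrite mxE.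
have -> : z = z *m M^T *m (invmx M)^T.
  by rewrite -mulmxA -trmx_mul mulVmx ?homV_unit // trmx1 mulmx1.
rewrite mxE; apply: eq_bigr => j _; rewrite /dual_coord !mxE.
rewrite [bary j * _]mulrC -mulrA [bary j * _]mulrC divfK ?bary_neq0 //.
congr (_ * _); rewrite big_ord_recl [z 0 ord0]mxE unlift_none [M^T _ _]mxE.
rewrite hom_mx0 mul1r; congr (_ + _); apply: eq_bigr => k _.
by rewrite [z _ _]mxE liftK [M^T _ _]mxE hom_mx_lift !mxE.
Qed.

Lemma dual_coord_vert j i : dual_coord j (row i U) = (j == i)%:R.
Proof.
rewrite /dual_coord inner_dual_vert addrC subrK.
by case: eqVneq => [->|_]; rewrite ?mul1r ?divff ?bary_neq0 ?mul0r ?mulr0.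
Qed.

Lemma dual_vert_inj : injective (fun i => row i U).
Proof.
move=> i i' Ui; have := dual_coord_vert i i'.
by rewrite -Ui dual_coord_vert eqxx; case: eqVneq => // _ /eqP; rewrite oner_eq0.
Qed.

Lemma dual_coord_affine (I : finType) (e : I -> rat) (w : I -> 'rV[rat]_d) j :
  \sum_k e k = 1 ->
  dual_coord j (\sum_k e k *: w k) = \sum_k e k * dual_coord j (w k).
Proof.
move=> e1; rewrite /dual_coord inner_suml.
under [RHS]eq_bigr do rewrite mulrCA; rewrite -mulr_sumr; congr (_ * _).
by under [RHS]eq_bigr do rewrite mulrDr mulr1; rewrite big_split /= e1.
Qed.

Variable W : 'M[rat]_(d.+1, d).
Hypothesis W_dual : forall u : 'rV[rat]_d, in_conv W u <-> in_dual V u.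

Lemma dual_coord_W_ge0 k j : 0 <= dual_coord j (row k W).
Proof.
have dualW : -1 <= inner (row k W) (row j V).
  exact: (W_dual (row k W)).1 (row_in_conv W k) _ (row_in_conv V j).
by rewrite mulr_ge0 ?bary_ge0 // addrC -lerBlDr sub0r.
Qed.

(* u_i has coordinates e_i; as all points of conv(W) have nonnegative
   coordinates, u_i can only be a convex combination of rows of W equal to it. *)
Lemma dual_vert_row_W i : exists k, row k W = row i U.
Proof.
have [e [e0 e1 ue]] := (W_dual (row i U)).2 (dual_vert_in_dual i).
have [k ek] : exists k, e k != 0.
  case: (pickP (fun k => e k != 0)) => [k ek | e_0]; first by exists k.
  move: e1; rewrite big1 => [/eqP|k _]; first by rewrite eq_sym oner_eq0.
  exact/eqP/negbFE/e_0.
have coord_k j : j != i -> dual_coord j (row k W) = 0.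
  move=> ji; have := dual_coord_affine (fun l => row l W) j e1.
  rewrite -ue dual_coord_vert (negbTE ji).
  move/esym/eqP; rewrite psumr_eq0 => [/allP/(_ k (mem_index_enum _))|l _]; last first.
    by rewrite mulr_ge0 ?dual_coord_W_ge0.
  by rewrite /= mulf_eq0 (negbTE ek) => /eqP.
have hom_k l : dual_coord i (row k W) * N i l =
               if unlift ord0 l is Some k' then row k W 0 k' else 1.
  rewrite -dual_coord_hom (bigD1 i) //= big1 ?addr0 // => j /coord_k ->.
  by rewrite mul0r.
have coord_i : dual_coord i (row k W) = 1.
  by have := hom_k ord0; rewrite dual_hom0 mulr1 unlift_none.
exists k; apply/matrixP => a l; rewrite ord1.
by have := hom_k (lift ord0 l); rewrite coord_i mul1r liftK => <-; rewrite !mxE.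
Qed.

Definition dual_index i : 'I_d.+1 := odflt ord0 [pick k | row k W == row i U].

Lemma row_dual_index i : row (dual_index i) W = row i U.
Proof.
rewrite /dual_index; case: pickP => [k /eqP //|none].
by have [k /eqP] := dual_vert_row_W i; rewrite none.
Qed.

Lemma dual_index_inj : injective dual_index.
Proof. by move=> i i' e; apply: dual_vert_inj; rewrite /= -!row_dual_index e. Qed.

Definition dual_perm : {perm 'I_d.+1} := (perm dual_index_inj)^-1.

Local Notation tau := dual_perm.

Lemma W_dual_vert j k : W j k = U (tau j) k.
Proof.
have := row_dual_index (tau j); rewrite -(permE dual_index_inj) permKV.
by move/matrixP/(_ 0 k); rewrite !mxE.
Qed.

Lemma hom_mxW : hom_mx W = row_perm tau N.
Proof.
apply/matrixP => j l; rewrite [RHS]mxE; case: (unliftP ord0 l) => [k|] ->.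
  by rewrite hom_mx_lift W_dual_vert mxE.
by rewrite hom_mx0 dual_hom0.
Qed.

Lemma norm_det_homW : `|\det (hom_mx W)| = `|\det N|.
Proof.
by rewrite hom_mxW row_permE det_mulmx det_perm normrM normrX normrN1 expr1n mul1r.
Qed.

Lemma VolW : Vol W = `|\det N|.
Proof. by rewrite Vol_hom_mx norm_det_homW. Qed.

Lemma homW_unit : hom_mx W \in unitmx.
Proof. by rewrite unitmxE unitfE -normr_eq0 norm_det_homW det_dual_hom_neq0. Qed.

Lemma bary_perm_homW : (\row_j bary (tau j)) *m hom_mx W = delta_mx 0 ord0.
Proof.
rewrite -bary_dual_hom hom_mxW; apply/matrixP => a l; rewrite ord1 !mxE.
rewrite [RHS](reindex_inj (@perm_inj _ tau)) /=.
by apply: eq_bigr => i _; rewrite !mxE.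
Qed.

Lemma weightW j : weight W j = `|\det N| * bary (tau j).
Proof.
rewrite (weight_bary j homW_unit bary_perm_homW) norm_det_homW.
by rewrite mxE (ger0_norm (bary_ge0 _)).
Qed.

Lemma weight_sumW : weight_sum W = `|\det N|.
Proof.
rewrite /weight_sum; under eq_bigr do rewrite weightW.
rewrite -mulr_sumr (reindex_perm tau^-1%g).
by under eq_bigr do rewrite permKV; rewrite sum_bary mulr1.
Qed.

Local Notation g := ((gor V W)%:R : rat).

Lemma ufpV i : ufp V W i = g / bary i.
Proof. by rewrite /ufp weight_sumV weightV_bary invfM mulrA mulfK ?det_homV_neq0. Qed.

Lemma ufpW j : ufp W V j = g / bary (tau j).
Proof.
rewrite /ufp weight_sumW weightW invfM mulrA mulfK ?det_dual_hom_neq0 //.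
by rewrite /gor mulnC.
Qed.

(* 1 / bary i = 1 + <v_i, u_i>, and g <v_i, u_i> = <gQ(V) v_i, gQ(W) u_i> is an
   integer because u_i is a vertex of W. *)
Lemma ufp_int i : ufp V W i \is a Num.int.
Proof.
have -> : ufp V W i = g + \sum_k (gQ V)%:R * V i k * ((gQ W)%:R * W (dual_index i) k).
  rewrite ufpV; have -> : (bary i)^-1 = 1 + inner (row i U) (row i V).
    by rewrite inner_dual_vert eqxx mul1r addrC subrK.
  rewrite mulrDr mulr1 /gor natrM mulr_sumr; congr (_ + _).
  apply: eq_bigr => k _; have /matrixP/(_ 0 k) := row_dual_index i.
  by rewrite !mxE => ->; ring.
rewrite rpredD ?rpred_nat // rpred_sum // => k _.
case/andP: (gQ_spec V) => _ /forallP/(_ i)/forallP/(_ k) intV.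
case/andP: (gQ_spec W) => _ /forallP/(_ (dual_index i))/forallP/(_ k).
exact: rpredM.
Qed.

Lemma ufp_gt0 i : 0 < ufp V W i.
Proof. by rewrite ufpV divr_gt0 ?ltr0n ?gor_gt0 ?bary_gt0. Qed.

Lemma natr_truncn_ufp i : (Num.truncn (ufp V W i))%:R = ufp V W i.
Proof.
apply/eqP; rewrite -natrEtruncn natrEint ufp_int.
exact: ltW (ufp_gt0 i).
Qed.

Lemma perm_eq_ufp : perm_eq (ufp_seq V W) (ufp_seq W V).
Proof.
have -> : ufp_seq W V = [seq ufp V W i | i <- [seq tau j | j <- enum 'I_d.+1]].
  by rewrite -map_comp; apply: eq_map => j; rewrite /= ufpW ufpV.
apply: perm_map; apply: uniq_perm; rewrite ?enum_uniq //.
  by rewrite map_inj_uniq ?enum_uniq //; exact: perm_inj.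
move=> x; rewrite mem_enum; apply/esym/mapP.
by exists ((tau^-1)%g x); rewrite ?mem_enum ?permKV.
Qed.

Lemma prod_ufp : \prod_i ufp V W i = g ^+ d.+1 * Vol V * Vol W.
Proof.
rewrite VolW Vol_hom_mx; under eq_bigr do rewrite ufpV.
rewrite big_split /= prodr_const card_ord -mulrA -normrM det_hom_mx_dual_hom.
rewrite ger0_norm //.
by apply: prodr_ge0 => i _; rewrite invr_ge0 bary_ge0.
Qed.

Variables lV lW : rat.
Hypotheses (lambdaV : is_lambda V lV) (lambdaW : is_lambda W lW).

(* alpha_i n_i = g Vol V / lV for every i, and the n_i are coprime. *)
Lemma ufp_lcmE : (ufp_lcm V W)%:R = g * Vol V / lV.
Proof.
case: lambdaV => lV_gt0 [n [n_gt0 gcd_n weight_n]].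
have ufp_n i : ufp V W i * (n i)%:R = g * Vol V / lV.
  rewrite Vol_hom_mx /ufp weight_n weight_sumV; field.
  by rewrite gt_eqF //= pnatr_eq0 -lt0n n_gt0.
pose K := (Num.truncn (ufp V W ord0) * n ord0)%N.
rewrite /ufp_lcm (@biglcmn_primitive _ _ n K) // => [|i|i].
- by rewrite natrM natr_truncn_ufp ufp_n.
- by rewrite -(ltr0n rat) natr_truncn_ufp ufp_gt0.
by apply/eqP; rewrite -(@eqr_nat rat) !natrM !natr_truncn_ufp !ufp_n.
Qed.

Lemma lambdaWE : lW = lV * Vol W / Vol V.
Proof.
rewrite -mulrA VolW Vol_hom_mx.
case: lambdaV => lV_gt0 [n [_ gcd_n weight_n]].
case: lambdaW => lW_gt0 [m [_ gcd_m weight_m]].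
have scale_gt0 : 0 < lV * (`|\det N| / `|\det M|).
  by rewrite mulr_gt0 ?divr_gt0 // lt_def
    ?det_homV_neq0 ?det_dual_hom_neq0 ?normr_ge0 ?lV_gt0.
have gcd_ntau : (\big[gcdn/0]_j n (tau j))%N = 1%N.
  by rewrite -gcd_n [RHS](reindex_perm tau).
apply/esym/(primitive_scale_uniq scale_gt0 lW_gt0 gcd_ntau gcd_m).
move=> j; rewrite -weight_m weightW.
have -> : bary (tau j) = weight V (tau j) / `|\det M|.
  by rewrite weightV_bary mulrAC divff ?mul1r ?det_homV_neq0.
by rewrite weight_n; ring.
Qed.

End DualSimplex.

Theorem proposition2p10 (d : nat) (V W : 'M[rat]_(d.+1, d))
  (HV : IP_simplex V)
  (HW : forall u : 'rV[rat]_d, in_conv W u <-> in_dual V u)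
  (lV lW : rat) (HlV : is_lambda V lV) (HlW : is_lambda W lW) :
  let g : rat := (gor V W)%:R in
  let P : rat := \prod_(i < d.+1) ufp V W i in
  let L : rat := (ufp_lcm V W)%:R in
  [/\ perm_eq (ufp_seq V W) (ufp_seq W V),
      Vol V * Vol W = P / g ^+ d.+1,
      lW * Vol V = P / (g ^+ d * L) /\ lV * Vol W = P / (g ^+ d * L)
    & lV * lW = P / (g ^ (d%:Z - 1) * L ^+ 2)].
Proof.
have [V_full /origin_interior_conv0 V_conv0] := HV.
have weightV_gt0 i : 0 < weight V i.
  by case: HlV => lV_gt0 [n [n_gt0 _ ->]]; rewrite mulr_gt0 ?ltr0n.
move=> g P L.
have g_neq0 : g != 0 by rewrite pnatr_eq0 -lt0n gor_gt0.
have lV_neq0 : lV != 0 by case: HlV => /lt0r_neq0.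
have Vol_neq0 : Vol V != 0 by rewrite Vol_hom_mx det_homV_neq0.
have -> : P = g ^+ d.+1 * Vol V * Vol W := prod_ufp V_full V_conv0 weightV_gt0 HW.
have -> : L = g * Vol V / lV := ufp_lcmE V_full V_conv0 weightV_gt0 HW HlV.
have [] := volume_lambda_identities d g_neq0 Vol_neq0 lV_neq0
  (lambdaWE V_full V_conv0 weightV_gt0 HW HlV HlW).
by split=> //; exact: (perm_eq_ufp V_full V_conv0 weightV_gt0 HW).
Qed.
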